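(* Let $b\ge 2$ be an integer. Every natural number that is antipalindromic in base $b$ and whose base-$b$ expansion has an odd number of digits is divisible by $\frac{b-1}{2}$ (in particular, $b$ is then odd, so $\frac{b-1}{2}$ is an integer).
   Context: For an integer $b\ge 2$, every natural number $m$ has a unique base-$b$ expansion $m=a_nb^n+\dots+a_1b+a_0$ with $a_0,\dots,a_n\in\{0,1,\dots,b-1\}$ and $a_n\neq 0$ (it has $n+1$ digits). The number $m$ is antipalindromic in base $b$ if $a_j=b-1-a_{n-j}$ for all $j\in\{0,1,\dots,n\}$. *)

From mathcomp Require Import all_boot.
Set Implicit Arguments. Unset Strict Implicit. Unset Printing Implicit Defensive.

(* A digit sequence a = [:: a_0; a_1; ...; a_n] (little-endian: a_j is the
   coefficient of b^j) is the base-b expansion of m when every digit lies in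
   {0,...,b-1}, the leading digit a_n is nonzero, and
   m = a_n b^n + ... + a_1 b + a_0. *)
Definition base_expansion (b m : nat) (a : seq nat) : Prop :=
  [/\ 0 < size a,
      all (fun d => d < b) a,
      last 0 a != 0
    & m = \sum_(j < size a) nth 0 a j * b ^ j].

Definition antipalindromic_digits (b : nat) (a : seq nat) : Prop :=
  forall j, j < size a -> nth 0 a j = b.-1 - nth 0 a ((size a).-1 - j).

Definition antipalindromic (b m : nat) : Prop :=
  exists a, base_expansion b m a /\ antipalindromic_digits b a.

From mathcomp Require Import all_boot.
From mathcomp Require Import zify.

Set Implicit Arguments.
Unset Strict Implicit.
Unset Printing Implicit Defensive.

(* The middle digit x of an odd-length antipalindrome equals b - 1 - x, so
   b = 2x + 1.  Since b = 1 (mod x), a number is congruent modulo x to its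
   digit sum, and pairing the digits a_j + a_(n-j) = b - 1 = 2x shows that the
   digit sum is (n + 1) x. *)

Lemma expansion_modn (b d n : nat) (c : nat -> nat) :
  b = 1 %[mod d] ->
  \sum_(j < n) c j * b ^ j = \sum_(j < n) c j %[mod d].
Proof.
move=> b1; rewrite -modn_summ -[RHS]modn_summ; congr (_ %% _).
apply: eq_bigr => j _.
by rewrite -modnMmr -modnXm b1 modnXm exp1n modnMmr muln1.
Qed.

Lemma antipalindromic_middle_digit (b : nat) (a : seq nat) :
  antipalindromic_digits b a -> odd (size a) ->
  b.-1 = (nth 0 a (size a)./2).*2.
Proof.
move=> anti odd_a; set k := (size a)./2.
have size_a : size a = k.*2.+1 by rewrite -{1}(odd_double_half (size a)) odd_a.
have := anti k; rewrite size_a /= -addnn addnK ltnS leq_addl; lia.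
Qed.

Lemma antipalindromic_digit_pair (b : nat) (a : seq nat) (j : nat) :
  all (fun d => d < b) a -> antipalindromic_digits b a -> j < size a ->
  nth 0 a j + nth 0 a ((size a).-1 - j) = b.-1.
Proof.
move=> /(all_nthP 0) digit_lt anti lt_j.
have := digit_lt ((size a).-1 - j); rewrite (anti _ lt_j); lia.
Qed.

Lemma antipalindromic_digit_sum (b : nat) (a : seq nat) :
  all (fun d => d < b) a -> antipalindromic_digits b a ->
  (\sum_(j < size a) nth 0 a j).*2 = size a * b.-1.
Proof.
move=> digit_lt anti.
rewrite -addnn {2}(reindex_inj rev_ord_inj) -big_split /=.
rewrite (eq_bigr (fun _ => b.-1)) ?sum_nat_const ?card_ord // => j _.
have -> : size a - j.+1 = (size a).-1 - j by lia.
exact: antipalindromic_digit_pair.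
Qed.

Theorem mainTheorem4 (b m : nat) (a : seq nat) :
  2 <= b ->
  base_expansion b m a ->
  antipalindromic_digits b a ->
  odd (size a) ->
  odd b /\ (b - 1)./2 %| m.
Proof.
move=> b_ge2 [_ digit_lt _ ->] anti odd_a.
set x := nth 0 a (size a)./2.
have b_pred : b.-1 = x.*2 := antipalindromic_middle_digit anti odd_a.
have b_eq : b = x.*2.+1 by lia.
split; first by rewrite b_eq /= odd_double.
have -> : (b - 1)./2 = x by rewrite subn1 b_pred doubleK.
have digit_sum : \sum_(j < size a) nth 0 a j = size a * x.
  apply: double_inj; rewrite (antipalindromic_digit_sum digit_lt anti) b_pred.
  by rewrite -!muln2 mulnA.
have b_mod : b = 1 %[mod x] by rewrite b_eq -addn1 -muln2 mulnC modnMDl.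
by rewrite /dvdn (expansion_modn _ _ b_mod) digit_sum modnMl.
Qed.
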